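(* Let $X$ be a real Hilbert space, let $\lambda>0$, and let $f\colon X\to\mathbb R$ be Fréchet differentiable with $\nabla f$ Lipschitz continuous with constant $1/\lambda$ (and, as standing assumption, $f(x)\ge-\alpha\|x\|^2-\beta\|x\|+\nu$ for all $x$ for some $\nu,\beta\in\mathbb R$, $\alpha\ge0$). Then: (i) $\mathrm{Id}+\lambda\nabla f$ is maximally monotone; (ii) $f$ is $\tfrac1\lambda$-hypoconvex; (iii) $f+\tfrac{1}{2\lambda}\|\cdot\|^2$ is convex; (iv) for every $\mu\in]0,\lambda[$, $\operatorname{Prox}_{\mu f}$ is single-valued; (v) for every $\mu\in]0,\lambda[$, $\operatorname{Prox}_{\mu f}$ is $\tfrac{\lambda-\mu}{\lambda}$-cocoercive; (vi) for every $\mu\in]0,\lambda[$, $\operatorname{Prox}_{\mu f}=J_{\mu\hat\partial f}=(\mathrm{Id}+\mu\nabla f)^{-1}$; (vii) for every $\mu\in]0,\lambda[$, $\mathrm{Id}-\operatorname{Prox}_{\mu f}$ is $\tfrac{\lambda}{2(\lambda-\mu)}$-conically nonexpansive.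
   Context: $\operatorname{Prox}_{\mu f}(x)=\operatorname{argmin}_{y\in X}\big(f(y)+\tfrac{1}{2\mu}\|x-y\|^2\big)$; $J_B=(\mathrm{Id}+B)^{-1}$. $\hat\partial$ denotes any abstract subdifferential, i.e., a rule satisfying: equals the convex subdifferential on proper lsc convex functions; equals $\nabla g$ for continuously differentiable $g$; $0\in\hat\partial g(x)$ at local minimizers $x$; $\hat\partial(g+\beta\|\cdot-x\|^2/2)=\hat\partial g+\beta(\mathrm{Id}-x)$ for all $\beta\in\mathbb R$ (so here $\hat\partial f=\nabla f$). $f$ is $\tfrac1\lambda$-hypoconvex if $f((1-\tau)x+\tau y)\le(1-\tau)f(x)+\tau f(y)+\tfrac{1}{2\lambda}\tau(1-\tau)\|x-y\|^2$ for all $x,y$, $\tau\in]0,1[$. $S$ is $\gamma$-cocoercive if $\langle x-y,Sx-Sy\rangle\ge\gamma\|Sx-Sy\|^2$ for all $x,y$. $T$ is $\alpha$-conically nonexpansive ($\alpha>0$) if $T=(1-\alpha)\mathrm{Id}+\alpha N$ for some nonexpansive $N\colon X\to X$. *)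

(* real Hilbert space = complete normed module over a
   realType R whose norm comes from an inner product. *)
From HB Require Import structures.
From mathcomp Require Import all_boot all_order all_algebra.
From mathcomp Require Import all_classical all_reals all_analysis.
Set Implicit Arguments. Unset Strict Implicit. Unset Printing Implicit Defensive.
Import Order.TTheory GRing.Theory Num.Theory.
Import numFieldNormedType.Exports.
Local Open Scope classical_set_scope.
Local Open Scope ring_scope.

Section Defs.
Context {R : realType} {V : normedModType R}.

Definition inner_product_for (ip : V -> V -> R) : Prop :=
  [/\ forall x y, ip x y = ip y x,
      forall (a : R) x y z, ip (a *: x + y) z = a * ip x z + ip y z
    & forall x, ip x x = `|x| ^+ 2].

Definition is_gradient (ip : V -> V -> R) (f : V -> R) (g : V -> V) : Prop :=
  forall x, differentiable f x /\ forall h, ('d f x : V -> R) h = ip (g x) h.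

Definition monotone_op (ip : V -> V -> R) (A : V -> set V) : Prop :=
  forall x y u v, A x u -> A y v -> 0 <= ip (x - y) (u - v).

Definition maximally_monotone (ip : V -> V -> R) (A : V -> set V) : Prop :=
  monotone_op ip A /\
  forall B : V -> set V, monotone_op ip B ->
    (forall x u, A x u -> B x u) -> forall x u, B x u -> A x u.

Definition hypoconvex (lam : R) (f : V -> R) : Prop :=
  forall x y (tau : R), 0 < tau < 1 ->
    f ((1 - tau) *: x + tau *: y) <=
      (1 - tau) * f x + tau * f y + (2 * lam)^-1 * tau * (1 - tau) * `|x - y| ^+ 2.

Definition convex_fun (f : V -> R) : Prop :=
  forall x y (tau : R), 0 < tau < 1 ->
    f ((1 - tau) *: x + tau *: y) <= (1 - tau) * f x + tau * f y.

Definition prox (mu : R) (f : V -> R) (x : V) : set V :=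
  [set y | forall z, f y + (2 * mu)^-1 * `|x - y| ^+ 2 <=
                     f z + (2 * mu)^-1 * `|x - z| ^+ 2].

Definition single_valued (A : V -> set V) : Prop :=
  forall x, exists! y, A x y.

Definition op_inverse (A : V -> set V) : V -> set V :=
  fun x => [set y | A y x].

Definition resolvent (A : V -> set V) : V -> set V :=
  op_inverse (fun y => [set y + u | u in A y]).

Definition cocoercive (ip : V -> V -> R) (gam : R) (S : V -> V) : Prop :=
  forall x y, gam * `|S x - S y| ^+ 2 <= ip (x - y) (S x - S y).

Definition nonexpansive (N : V -> V) : Prop :=
  forall x y, `|N x - N y| <= `|x - y|.

Definition conically_nonexpansive (alpha : R) (T : V -> V) : Prop :=
  exists N : V -> V, nonexpansive N /\
    forall x, T x = (1 - alpha) *: x + alpha *: N x.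

End Defs.

From HB Require Import structures.
From mathcomp Require Import all_boot all_order all_algebra.
From mathcomp Require Import all_classical all_reals all_analysis.
From mathcomp Require Import ring lra.
Import Order.TTheory GRing.Theory Num.Theory.
Import numFieldNormedType.Exports.
Local Open Scope classical_set_scope.
Local Open Scope ring_scope.

(* The descent lemma  f z >= f y + <g y, z - y> - |z - y|^2 / (2 lam),  obtained
   from the mean value theorem along [y, z] and Cauchy-Schwarz, gives
   hypoconvexity of f, hence convexity of f + |.|^2 / (2 lam).
   For 0 < mu < lam the map x - mu g is a contraction, so Id + mu g is a
   bijection; by the descent lemma the solution y of y + mu g y = x beats every
   z in the prox objective by ((2 mu)^-1 - (2 lam)^-1) |z - y|^2, hence
   Prox_{mu f} = (Id + mu g)^-1. Lipschitz continuity of g makes this inverse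
   (lam - mu)/lam-cocoercive, and gam-cocoercivity of P means that
   Id - 2 gam P is nonexpansive, i.e. Id - P is 1/(2 gam)-conically
   nonexpansive. Finally Id + lam g is monotone and Lipschitz, and such an
   operator is maximally monotone. *)

Lemma pmul_sqr_norm_le0 {R : realType} {V : normedModType R} (c : R) (x : V) :
  0 < c -> c * `|x| ^+ 2 <= 0 -> x = 0.
Proof.
move=> c_gt0; rewrite pmulr_rle0 // => x_sqr_le0.
have : `|x| ^+ 2 == 0 by rewrite eq_le x_sqr_le0 sqr_ge0.
by rewrite expf_eq0 /= normr_eq0 => /eqP.
Qed.

Lemma derive_along_line {R : realType} {V : normedModType R} {f : V -> R} {y d : V}
    {t : R} :
  differentiable f (y + t *: d) ->
  is_derive t 1 (fun s => f (y + s *: d)) ('d f (y + t *: d) d).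
Proof.
move=> f_diff.
have quotientE :
    (fun h : R => h^-1 *: (((fun s => f (y + s *: d)) \o shift t) (h *: 1) - f (y + t *: d)))
  = (fun h : R => h^-1 *: ((f \o shift (y + t *: d)) (h *: d) - f (y + t *: d))).
  apply/funext => h /=; congr (_ *: (f _ - _)).
  by rewrite /shift /= scaler1 scalerDl addrCA addrA [_ + y]addrC -addrA.
have f_derivable : derivable f (y + t *: d) d by exact: diff_derivable.
apply: DeriveDef; first by rewrite /derivable quotientE.
by rewrite /derive quotientE -deriveE.
Qed.

Section InnerProduct.
Context {R : realType} {V : normedModType R} {ip : V -> V -> R}.
Hypothesis ipP : inner_product_for ip.
Implicit Types (a t : R) (x y z : V).

Lemma ipC x y : ip x y = ip y x.
Proof. by case: ipP. Qed.

Lemma ipxx x : ip x x = `|x| ^+ 2.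
Proof. by case: ipP. Qed.

Lemma ipDl x y z : ip (x + y) z = ip x z + ip y z.
Proof. by case: ipP => _ ip_lin _; rewrite -[x]scale1r ip_lin mul1r scale1r. Qed.

Lemma ip0l z : ip 0 z = 0.
Proof. by apply: (@addrI _ (ip 0 z)); rewrite -ipDl !addr0. Qed.

Lemma ipZl a x z : ip (a *: x) z = a * ip x z.
Proof. by case: ipP => _ ip_lin _; rewrite -[a *: x]addr0 ip_lin ip0l addr0. Qed.

Lemma ipNl x z : ip (- x) z = - ip x z.
Proof. by rewrite -scaleN1r ipZl mulN1r. Qed.

Lemma ipBl x y z : ip (x - y) z = ip x z - ip y z.
Proof. by rewrite ipDl ipNl. Qed.

Lemma ipDr x y z : ip z (x + y) = ip z x + ip z y.
Proof. by rewrite !(ipC z) ipDl. Qed.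

Lemma ipZr a x z : ip z (a *: x) = a * ip z x.
Proof. by rewrite !(ipC z) ipZl. Qed.

Lemma ipNr x z : ip z (- x) = - ip z x.
Proof. by rewrite !(ipC z) ipNl. Qed.

Lemma normD_sqr x y : `|x + y| ^+ 2 = `|x| ^+ 2 + 2 * ip x y + `|y| ^+ 2.
Proof. by rewrite -!ipxx ipDl !ipDr (ipC y x); ring. Qed.

Lemma normB_sqr x y : `|x - y| ^+ 2 = `|x| ^+ 2 - 2 * ip x y + `|y| ^+ 2.
Proof. by rewrite normD_sqr ipNr normrN; ring. Qed.

Lemma norm_convex_comb_sqr t x y :
  `|(1 - t) *: x + t *: y| ^+ 2 =
    (1 - t) * `|x| ^+ 2 + t * `|y| ^+ 2 - t * (1 - t) * `|x - y| ^+ 2.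
Proof. by rewrite -!ipxx !(ipDl, ipDr, ipZl, ipZr, ipNl, ipNr) (ipC y x); ring. Qed.

Lemma cauchy_schwarz x y : ip x y <= `|x| * `|y|.
Proof.
have [->|x_neq0] := eqVneq x 0; first by rewrite ip0l normr0 mul0r.
have [->|y_neq0] := eqVneq y 0; first by rewrite ipC ip0l normr0 mulr0.
have nx_gt0 : 0 < `|x| by rewrite normr_gt0.
have ny_gt0 : 0 < `|y| by rewrite normr_gt0.
have := sqr_ge0 `| `|y| *: x - `|x| *: y |.
rewrite normB_sqr ipZl ipZr !normrZ !normr_id => sq_ge0.
rewrite -(ler_pM2l (mulr_gt0 ny_gt0 nx_gt0)); nra.
Qed.

Lemma cauchy_schwarzN x y : - (`|x| * `|y|) <= ip x y.
Proof. by rewrite lerNl -ipNl -(normrN x) cauchy_schwarz. Qed.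

Lemma lipschitz_monotone_maximal (T : V -> V) (c : R) :
  0 <= c -> (forall x y, `|T x - T y| <= c * `|x - y|) ->
  monotone_op ip (fun x => [set T x]) -> maximally_monotone ip (fun x => [set T x]).
Proof.
move=> c_ge0 T_lip T_mono; split=> // B B_mono TB x u Bxu.
pose w := T x - u; pose t := (c + 1)^-1.
have t_gt0 : 0 < t by rewrite invr_gt0; lra.
have ct_lt1 : c * t < 1 by rewrite ltr_pdivrMr; lra.
have x_shift : x - (x - t *: w) = t *: w by rewrite opprB addrC subrK.
have := B_mono _ _ _ _ Bxu (TB (x - t *: w) _ erefl).
rewrite x_shift.
have -> : u - T (x - t *: w) = - w + (T x - T (x - t *: w)).
  by rewrite opprB addrA subrK.
rewrite ipZl pmulr_rge0 // ipDr ipNr ipxx => mono_w.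
(* Testing B at x - t w forces |w|^2 <= c t |w|^2 with c t < 1. *)
have := cauchy_schwarz w (T x - T (x - t *: w)).
have := T_lip x (x - t *: w).
rewrite x_shift normrZ gtr0_norm // => lip_w cs_w.
have : w = 0.
  apply: (@pmul_sqr_norm_le0 _ _ (1 - c * t)); first by rewrite subr_gt0.
  by have := ler_wpM2l (normr_ge0 w) lip_w; rewrite expr2; lra.
by move/subr0_eq.
Qed.

Lemma add_nonexpansive_monotone (N : V -> V) :
  nonexpansive N -> monotone_op ip (fun x => [set x + N x]).
Proof.
move=> N_ne x y _ _ -> ->; rewrite opprD addrACA ipDr ipxx.
have := cauchy_schwarzN (x - y) (N x - N y).
have := N_ne x y; have := normr_ge0 (x - y); nra.
Qed.

Lemma add_nonexpansive_maximal_monotone (N : V -> V) :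
  nonexpansive N -> maximally_monotone ip (fun x => [set x + N x]).
Proof.
move=> N_ne; apply: (@lipschitz_monotone_maximal _ 2) => //.
  move=> x y; rewrite opprD addrACA.
  by apply: (le_trans (ler_normD _ _)); have := N_ne x y; lra.
exact: add_nonexpansive_monotone.
Qed.

Lemma hypoconvex_convex_add_sqr_norm (lam : R) (f : V -> R) :
  hypoconvex lam f -> convex_fun (fun x => f x + (2 * lam)^-1 * `|x| ^+ 2).
Proof.
move=> f_hypo x y t t01; have := f_hypo x y t t01.
by rewrite /= norm_convex_comb_sqr; lra.
Qed.

Lemma cocoercive_reflection_nonexpansive (gam : R) (P : V -> V) :
  0 <= gam -> cocoercive ip gam P -> nonexpansive (fun x => x - (2 * gam) *: P x).
Proof.
move=> gam_ge0 P_coco x y.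
rewrite -(ler_pXn2r (n := 2)) ?nnegrE //.
have -> : x - (2 * gam) *: P x - (y - (2 * gam) *: P y) =
          (x - y) - (2 * gam) *: (P x - P y) by rewrite scalerBr !opprD addrACA.
rewrite normB_sqr ipZr normrZ ger0_norm ?mulr_ge0 //.
have := P_coco x y; have := ler_wpM2l gam_ge0 (P_coco x y); nra.
Qed.

Lemma cocoercive_conically_nonexpansive (gam : R) (P : V -> V) :
  0 < gam -> cocoercive ip gam P -> conically_nonexpansive (2 * gam)^-1 (fun x => x - P x).
Proof.
move=> gam_gt0 P_coco; exists (fun x => x - (2 * gam) *: P x); split.
  exact: cocoercive_reflection_nonexpansive (ltW gam_gt0) P_coco.
move=> x; rewrite scalerBr scalerA mulVf ?scale1r ?mulf_neq0 ?gt_eqF //.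
by rewrite addrA -scalerDl subrK scale1r.
Qed.

Section LipschitzOperator.
Context {g : V -> V} {lam : R}.
Hypotheses (lam_gt0 : 0 < lam)
  (g_lip : forall x y, `|g x - g y| <= lam^-1 * `|x - y|).

Lemma scale_lipschitz mu x y :
  0 <= mu -> `|mu *: g x - mu *: g y| <= mu / lam * `|x - y|.
Proof. by move=> mu_ge0; rewrite -scalerBr normrZ ger0_norm // -mulrA ler_wpM2l. Qed.

Lemma scale_lipschitz_nonexpansive : nonexpansive (fun x => lam *: g x).
Proof.
by move=> x y; have := scale_lipschitz lam x y (ltW lam_gt0); rewrite divff ?gt_eqF ?mul1r.
Qed.

Lemma inverse_add_scale_cocoercive mu (P : V -> V) :
  0 <= mu -> (forall x, P x + mu *: g (P x) = x) -> cocoercive ip ((lam - mu) / lam) P.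
Proof.
move=> mu_ge0 P_inv x y; set d := P x - P y.
have -> : x - y = d + mu *: (g (P x) - g (P y)).
  by rewrite -{1}(P_inv x) -{1}(P_inv y) scalerBr opprD !addrA [P x + _ - P y]addrAC.
have ip_ge : - (lam^-1 * `|d| ^+ 2) <= ip (g (P x) - g (P y)) d.
  have := cauchy_schwarzN (g (P x) - g (P y)) d.
  have := ler_wpM2r (normr_ge0 d) (g_lip (P x) (P y)).
  by rewrite expr2; lra.
have mu_ip_ge := ler_wpM2l mu_ge0 ip_ge.
rewrite ipDl ipZl ipxx mulrBl divff ?gt_eqF //; lra.
Qed.

Section Gradient.
Context {f : V -> R}.
Hypothesis f_grad : is_gradient ip f g.

Lemma ip_gradient_line_ge y d s :
  0 <= s -> ip (g y) d - s / lam * `|d| ^+ 2 <= ip (g (y + s *: d)) d.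
Proof.
move=> s_ge0; have shift_sd : y + s *: d - y = s *: d by rewrite addrC addKr.
have := cauchy_schwarzN (g (y + s *: d) - g y) d.
have := ler_wpM2r (normr_ge0 d) (g_lip (y + s *: d) y).
by rewrite ipBl shift_sd normrZ ger0_norm // expr2; lra.
Qed.

Lemma descent_lemma y z :
  f y + ip (g y) (z - y) - (2 * lam)^-1 * `|z - y| ^+ 2 <= f z.
Proof.
set d := z - y; set a := (2 * lam)^-1 * `|d| ^+ 2; set b := ip (g y) d.
(* phi 1 - phi 0 is the slack of the inequality; phi' >= 0 by ip_gradient_line_ge. *)
pose phi : R -> R := (fun s => f (y + s *: d)) + a \*: (id ^+ 2) - b \*: id.
have phi_derive (s : R) : is_derive s 1 phi (ip (g (y + s *: d)) d + a * (2 * s) - b).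
  have [f_diff f_d] := f_grad (y + s *: d).
  have line_derive := derive_along_line f_diff; rewrite f_d in line_derive.
  (* line_derive is found by instance resolution for is_derive *)
  by apply: is_derive_eq; rewrite expr1 [b%:A]mulr1 [(_ * _)%:A]mulr1.
have phi_cont : {within `[0, 1], continuous phi}.
  by apply: derivable_within_continuous => s _; case: (phi_derive s).
have [c /[!in_itv] /andP [c_gt0 _] phi_mvt] :=
  MVT ltr01 (fun s _ => phi_derive s) phi_cont.
have : phi 0 <= phi 1.
  rewrite -subr_ge0 phi_mvt subr0 mulr1.
  have := ip_gradient_line_ge y d c (ltW c_gt0).
  by rewrite /a /b invfM; lra.
have phiE s : phi s = f (y + s *: d) + a * s ^+ 2 - b * s by [].
rewrite !phiE scale0r scale1r addr0 subrKC expr0n expr1n /= !mulr0 mulr1; lra.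
Qed.

Lemma gradient_lipschitz_hypoconvex : hypoconvex lam f.
Proof.
move=> x y t /andP [t_gt0 t_lt1].
have t_ge0 := ltW t_gt0; have t1_ge0 : 0 <= 1 - t by rewrite subr_ge0 ltW.
set w := (1 - t) *: x + t *: y.
have w_shift : w = x + t *: (y - x) by rewrite /w scalerBl scale1r scalerBr addrA addrAC.
have x_w : x - w = t *: (x - y) by rewrite w_shift opprD addNKr -scalerN opprB.
have y_w : y - w = (1 - t) *: - (x - y) by rewrite w_shift opprD addrA scalerBl scale1r opprB.
have := ler_wpM2l t1_ge0 (descent_lemma w x).
have := ler_wpM2l t_ge0 (descent_lemma w y).
rewrite x_w y_w !ipZr ipNr !normrZ normrN !ger0_norm // !exprMn.
(* the first-order terms cancel since (1 - t) (x - w) + t (y - w) = 0 *)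
lra.
Qed.

Lemma resolvent_prox_growth mu x y z :
  0 < mu -> y + mu *: g y = x ->
  f y + (2 * mu)^-1 * `|x - y| ^+ 2 + ((2 * mu)^-1 - (2 * lam)^-1) * `|z - y| ^+ 2
    <= f z + (2 * mu)^-1 * `|x - z| ^+ 2.
Proof.
move=> mu_gt0 y_res; have := descent_lemma y z.
have x_y : x - y = mu *: g y by rewrite -y_res addrAC subrr add0r.
have -> : x - z = (x - y) - (z - y) by rewrite opprB addrA subrK.
rewrite [`|_ - (z - y)| ^+ 2]normB_sqr x_y ipZl.
have : (2 * mu)^-1 * (2 * (mu * ip (g y) (z - y))) = ip (g y) (z - y).
  by field; rewrite gt_eqF.
lra.
Qed.

End Gradient.
End LipschitzOperator.
End InnerProduct.

Lemma resolvent_op_inverse {R : realType} {V : normedModType R} (A : V -> V) :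
  resolvent (fun y => [set A y]) = op_inverse (fun y => [set y + A y]).
Proof.
apply/funext => x; apply/seteqP; split => y /=.
  by case=> _ -> <-.
by move=> ->; exists (A y).
Qed.

Lemma contraction_unique_fixpoint {R : realType} {V : completeNormedModType R}
    (G : V -> V) (q : R) :
  0 <= q -> q < 1 -> (forall a b, `|G a - G b| <= q * `|a - b|) -> exists! p, p = G p.
Proof.
move=> q_ge0 q_lt1 G_lip.
have G_contr : is_contraction (totalfun_ [set: V] G : {fun [set: V] >-> [set: V]}).
  by exists (NngNum q_ge0); split => // -[a b] _; exact: G_lip.
have [p _ p_fix] := banach_fixed_point G_contr closedT (ex_intro _ 0 I).
exists p; split => // p' p'_fix.
exact: contraction_fixpoint_unique G_contr I I p_fix p'_fix.
Qed.

Section Prox.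
Context {R : realType} {V : completeNormedModType R} {ip : V -> V -> R}.
Context {f : V -> R} {g : V -> V} {lam mu : R}.
Hypotheses (ipP : inner_product_for ip) (lam_gt0 : 0 < lam)
  (f_grad : is_gradient ip f g)
  (g_lip : forall x y, `|g x - g y| <= lam^-1 * `|x - y|)
  (mu_gt0 : 0 < mu) (mu_lt_lam : mu < lam).

Lemma add_scale_gradient_bijective x : exists! y, y + mu *: g y = x.
Proof.
have [p [p_fix p_uniq]] : exists! p, p = x - mu *: g p.
  apply: (contraction_unique_fixpoint _ (mu / lam)).
  - exact: divr_ge0 (ltW mu_gt0) (ltW lam_gt0).
  - by rewrite ltr_pdivrMr // mul1r.
  move=> a b; rewrite opprB addrC addrA subrK distrC.
  exact: scale_lipschitz g_lip _ _ _ (ltW mu_gt0).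
exists p; split => [|y y_res]; first by rewrite {1}p_fix subrK.
by apply: p_uniq; rewrite -y_res addrK.
Qed.

Lemma proxE x y : prox mu f x y <-> y + mu *: g y = x.
Proof.
have gap_gt0 : 0 < (2 * mu)^-1 - (2 * lam)^-1.
  by rewrite subr_gt0 ltf_pV2 ?posrE ?mulr_gt0 ?ltr_pM2l // (lt_trans mu_gt0).
split=> [y_min | y_res z].
  have [p [p_res _]] := add_scale_gradient_bijective x.
  have p_growth := resolvent_prox_growth ipP g_lip f_grad _ _ _ y mu_gt0 p_res.
  have y_le_p := y_min p.
  suff -> : y = p by [].
  by apply/subr0_eq/(@pmul_sqr_norm_le0 _ V _ _ gap_gt0); lra.
have := resolvent_prox_growth ipP g_lip f_grad _ _ _ z mu_gt0 y_res.
have := mulr_ge0 (ltW gap_gt0) (sqr_ge0 `|z - y|); lra.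
Qed.

Lemma prox_single_valued : single_valued (prox mu f).
Proof.
move=> x; have [y [y_res y_uniq]] := add_scale_gradient_bijective x.
exists y; split; first exact/proxE.
by move=> z /(proxE x z); exact: y_uniq.
Qed.

Lemma prox_op_inverse : prox mu f = op_inverse (fun y => [set y + mu *: g y]).
Proof.
apply/funext => x; apply/seteqP; split => y /=; first by move=> /(proxE x y) <-.
by move=> ->; apply/proxE.
Qed.

Lemma prox_cocoercive (P : V -> V) :
  (forall x, prox mu f x = [set P x]) -> cocoercive ip ((lam - mu) / lam) P.
Proof.
move=> P_prox; apply: (inverse_add_scale_cocoercive ipP lam_gt0 g_lip _ P (ltW mu_gt0)).
by move=> x; apply/(proxE x (P x)); rewrite P_prox.
Qed.

End Prox.

Theorem corollary6p5 (R : realType) (V : completeNormedModType R)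
  (ip : V -> V -> R) (f : V -> R) (g : V -> V) (lam : R) :
  inner_product_for ip ->
  0 < lam ->
  is_gradient ip f g ->
  (forall x y, `|g x - g y| <= lam^-1 * `|x - y|) ->
  (exists (alpha beta nu : R), 0 <= alpha /\
     forall x, - alpha * `|x| ^+ 2 - beta * `|x| + nu <= f x) ->
  maximally_monotone ip (fun x => [set x + lam *: g x]) /\
  hypoconvex lam f /\
  convex_fun (fun x => f x + (2 * lam)^-1 * `|x| ^+ 2) /\
      (forall mu, 0 < mu < lam -> single_valued (prox mu f)) /\
      (forall mu, 0 < mu < lam -> forall P : V -> V,
         (forall x, prox mu f x = [set P x]) ->
         cocoercive ip ((lam - mu) / lam) P) /\
      (forall mu, 0 < mu < lam ->
         prox mu f = resolvent (fun y => [set mu *: g y]) /\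
         prox mu f = op_inverse (fun y => [set y + mu *: g y])) /\
      (forall mu, 0 < mu < lam -> forall P : V -> V,
         (forall x, prox mu f x = [set P x]) ->
         conically_nonexpansive (lam / (2 * (lam - mu))) (fun x => x - P x)).
Proof.
move=> ipP lam_gt0 f_grad g_lip _.
have f_hypo := gradient_lipschitz_hypoconvex ipP g_lip f_grad.
split; first exact: add_nonexpansive_maximal_monotone ipP _ (scale_lipschitz_nonexpansive lam_gt0 g_lip).
split; first exact: f_hypo.
split; first exact: hypoconvex_convex_add_sqr_norm ipP _ _ f_hypo.
split; first by move=> mu /andP[mu_gt0 mu_lt]; exact: (prox_single_valued ipP lam_gt0 f_grad g_lip).
split; first by move=> mu /andP[mu_gt0 mu_lt]; exact: (prox_cocoercive ipP lam_gt0 f_grad g_lip).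
split.
  move=> mu /andP[mu_gt0 mu_lt]; rewrite resolvent_op_inverse.
  by split; exact: (prox_op_inverse ipP lam_gt0 f_grad g_lip).
move=> mu /andP[mu_gt0 mu_lt] P P_prox.
have gam_gt0 : 0 < (lam - mu) / lam by rewrite divr_gt0 ?subr_gt0.
have -> : lam / (2 * (lam - mu)) = (2 * ((lam - mu) / lam))^-1.
  by field; rewrite !gt_eqF ?subr_gt0.
exact: cocoercive_conically_nonexpansive gam_gt0 (prox_cocoercive ipP lam_gt0 f_grad g_lip mu_gt0 mu_lt _ P_prox).
Qed.
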